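(* $\mu(Q_3)=5$, $\mu(Q_4)=9$ and $\mu(Q_5)=16$. For instance, $\{000,001,100,110,011\}$ is a mutual-visibility set of $Q_3$; $\{0000,0001,0100,0110,0011,1101,1010,1011,1110\}$ is one of $Q_4$; and $\{00000,00001,00100,00110,00011,01101,01010,01011,01110,10101,10111,11000,11001,11100,11110,11011\}$ is one of $Q_5$.
   Context: $Q_d$ is the hypercube with vertex set $\{0,1\}^d$, two vertices adjacent iff their strings differ in exactly one bit. For a connected graph $G$ and $X\subseteq V(G)$, two vertices $x,y$ are $X$-visible if some shortest $x,y$-path has no internal vertex in $X$. $X$ is a mutual-visibility set if every two vertices of $X$ are $X$-visible; $\mu(G)$ is the maximum cardinality of a mutual-visibility set of $G$. *)

From mathcomp Require Import all_boot.
Set Implicit Arguments. Unset Strict Implicit. Unset Printing Implicit Defensive.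

Section Graphs.
Variables (T : finType) (e : rel T).

Definition walk (x y : T) (p : seq T) : Prop := path e x p /\ last x p = y.

Definition shortest_path (x y : T) (p : seq T) : Prop :=
  walk x y p /\ forall q, walk x y q -> size p <= size q.

(* internal vertices of the walk x :: p (all vertices except x and last x p) *)
Definition internal (p : seq T) : seq T := take (size p).-1 p.

Definition visible (X : {set T}) (x y : T) : Prop :=
  exists p, shortest_path x y p /\ forall v, v \in internal p -> v \notin X.

Definition mutual_visibility_set (X : {set T}) : Prop :=
  forall x y, x \in X -> y \in X -> visible X x y.

Definition is_mu (n : nat) : Prop :=
  (exists X : {set T}, mutual_visibility_set X /\ #|X| = n) /\
  (forall X : {set T}, mutual_visibility_set X -> #|X| <= n).
End Graphs.

Definition Qadj (d : nat) : rel (d.-tuple bool) :=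
  fun u v => #|[set i : 'I_d | tnth u i != tnth v i]| == 1.

(* the bit string b_0 b_1 ... b_{d-1}, written as a list of 0/1 digits *)
Definition vtx (d : nat) (s : seq nat) : d.-tuple bool :=
  [tuple nth 0 s i != 0 | i < d].

From mathcomp Require Import all_boot zify.
Set Implicit Arguments. Unset Strict Implicit. Unset Printing Implicit Defensive.

(* In Q_d the distance of two vertices is their Hamming distance, and the
   shortest paths between them are the walks flipping, one at a time, the bits
   in which they differ. Visibility is thus decided by a finite search over
   such walks, and mutual visibility of a set by checking every pair; the
   three sets of the statement pass this check. For the upper bounds, subsets
   of mutual-visibility sets are again mutual-visibility sets, so candidates
   can be grown one vertex at a time with pruning: in Q_3 and Q_4 this
   exhaustive search finds no such set of size 6, resp. 10. For Q_5, split the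
   vertices by their last bit into two copies of Q_4: the search shows that a
   mutual-visibility set meets each half in at most 9 vertices, and in at most
   7 vertices of one half when it meets the other in 9. *)

(* [has] and [all] whose recursive call is skipped once the answer is known;
   [vm_compute] evaluates the arguments of [||] and [&&] eagerly. *)
Fixpoint lazy_has {A} (p : pred A) (s : seq A) : bool :=
  if s is x :: s' then (if p x then true else lazy_has p s') else false.
Fixpoint lazy_all {A} (p : pred A) (s : seq A) : bool :=
  if s is x :: s' then (if p x then lazy_all p s' else false) else true.

Lemma lazy_hasE A (p : pred A) s : lazy_has p s = has p s.
Proof. by elim: s => //= x s ->; case: (p x). Qed.

Lemma lazy_allE A (p : pred A) s : lazy_all p s = all p s.
Proof. by elim: s => //= x s ->; case: (p x). Qed.

Fixpoint all_pairs {A} (r : A -> A -> bool) (s : seq A) : bool :=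
  if s is x :: s' then (if lazy_all (r x) s' then all_pairs r s' else false)
  else true.

Lemma all_pairsP (A : eqType) (r : rel A) (s : seq A) :
  {in s &, symmetric r} -> {in s, reflexive r} ->
  reflect {in s &, forall x y, r x y} (all_pairs r s).
Proof.
elim: s => [|x s IH] /= r_sym r_refl; first by left.
have r_sym' : {in s &, symmetric r}.
  by move=> a b a_s b_s; apply: r_sym; rewrite inE ?a_s ?b_s orbT.
have r_refl' : {in s, reflexive r}.
  by move=> a a_s; apply: r_refl; rewrite inE a_s orbT.
rewrite lazy_allE; case: allP => [r_x | r_xN]; last first.
  by right=> r_s; apply: r_xN => y y_s; apply: r_s; rewrite inE ?eqxx ?y_s ?orbT.
apply: (iffP (IH r_sym' r_refl')) => r_s a b; last first.
  by move=> a_s b_s; apply: r_s; rewrite inE ?a_s ?b_s orbT.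
rewrite !inE => /predU1P[-> | a_s] /predU1P[-> | b_s].
- exact/r_refl/mem_head.
- exact: r_x.
- by rewrite r_sym ?inE ?eqxx ?a_s ?orbT //; apply: r_x.
- exact: r_s.
Qed.

Fixpoint flip_at (i : nat) (s : seq bool) : seq bool :=
  if s is b :: s' then (if i is i'.+1 then b :: flip_at i' s' else ~~ b :: s')
  else [::].

Fixpoint hamming (s t : seq bool) : nat :=
  match s, t with b :: s', c :: t' => (b != c) + hamming s' t' | _, _ => 0 end.

Lemma size_flip_at i s : size (flip_at i s) = size s.
Proof. by elim: s i => [|b s IH] [|i] //=; rewrite IH. Qed.

Lemma hammingC s t : hamming s t = hamming t s.
Proof. by elim: s t => [|b s IH] [|c t] //=; rewrite IH eq_sym. Qed.

Lemma hammingxx s : hamming s s = 0.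
Proof. by elim: s => //= b s ->; rewrite eqxx. Qed.

Lemma hamming_eq0 s t : size s = size t -> (hamming s t == 0) = (s == t).
Proof.
elim: s t => [|b s IH] [|c t] //= [] s_t; rewrite eqseq_cons -IH //.
by case: b; case: c.
Qed.

Lemma hamming_flip_at i s t : i < size s -> size s = size t ->
  hamming (flip_at i s) t + 2 * (nth false s i != nth false t i) = (hamming s t).+1.
Proof.
elim: s t i => [|b s IH] [|c t] [|i] //=.
- by move=> _ _; case: b; case: c => /=; lia.
- by move=> lt_i_s [] s_t; have := IH t i lt_i_s s_t; lia.
Qed.

Lemma hamming_gt0 s t : size s = size t -> 0 < hamming s t ->
  exists2 i, i < size s & nth false s i != nth false t i.
Proof.
elim: s t => [|b s IH] [|c t] //= [] s_t.
case: (b =P c) => [->|b_c] /=; last by exists 0 => //; apply/eqP.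
by rewrite add0n => /(IH _ s_t) [i lt_i_s s_t_i]; exists i.+1.
Qed.

Lemma hamming_eq1 s t : size s = size t -> hamming s t = 1 ->
  exists2 i, i < size s & t = flip_at i s.
Proof.
elim: s t => [|b s IH] [|c t] //= [] s_t.
case: (b =P c) => [->|b_c] /=.
  by rewrite add0n => /(IH _ s_t) [i lt_i_s ->]; exists i.+1.
move=> [] /eqP; rewrite hamming_eq0 // => /eqP ->; exists 0 => //.
by case: b c b_c => [] [].
Qed.

Lemma hamming_sum n s t : size s = n -> size t = n ->
  \sum_(i < n) (nth false s i != nth false t i) = hamming s t.
Proof.
elim: n s t => [|n IH] [|b s] [|c t] //=; first by rewrite big_ord0.
by move=> [] s_n [] t_n; rewrite big_ord_recl /= -(IH s t s_n t_n).
Qed.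

Lemma mutual_visibility_set_sub (T : finType) (e : rel T) (X Y : {set T}) :
  mutual_visibility_set e X -> Y \subset X -> mutual_visibility_set e Y.
Proof.
move=> X_mv /subsetP YX x y x_Y y_Y; have [p [xyp p_X]] := X_mv x y (YX _ x_Y) (YX _ y_Y).
by exists p; split=> // v /p_X; apply: contra; apply: YX.
Qed.

Section Hypercube.
Variable d : nat.
Local Notation T := (d.-tuple bool).

Lemma flip_tuple_subproof i (u : T) : size (flip_at i u) == d.
Proof. by rewrite size_flip_at size_tuple. Qed.
Definition flip_tuple i (u : T) : T := Tuple (flip_tuple_subproof i u).

Lemma QadjE (u v : T) : Qadj u v = (hamming u v == 1).
Proof.
rewrite /Qadj -(hamming_sum (size_tuple u) (size_tuple v)) -sum1_card big_mkcond /=.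
by congr (_ == 1); apply: eq_bigr => i _; rewrite inE !(tnth_nth false); case: (_ != _).
Qed.

Lemma Qadj_sym : symmetric (@Qadj d).
Proof. by move=> u v; rewrite !QadjE hammingC. Qed.

Lemma QadjP (u v : T) : Qadj u v -> exists2 i, i < d & v = flip_tuple i u.
Proof.
rewrite QadjE => /eqP /hamming_eq1 []; first by rewrite !size_tuple.
by rewrite size_tuple => i lt_i_d v_u; exists i => //; apply: val_inj.
Qed.

Lemma hamming_tuple_eq0 (u v : T) : (hamming u v == 0) = (u == v).
Proof. by rewrite hamming_eq0 // !size_tuple. Qed.

Lemma hamming_flip_diff i (u v : T) : i < d -> nth false u i != nth false v i ->
  hamming (flip_tuple i u) v = (hamming u v).-1.
Proof.
move=> lt_i_d uv_i; have uv : size u = size v by rewrite !size_tuple.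
have lt_i_u : i < size u by rewrite size_tuple.
by have := hamming_flip_at lt_i_u uv; rewrite uv_i /=; lia.
Qed.

Lemma hamming_flip_same i (u v : T) : i < d -> nth false u i = nth false v i ->
  hamming (flip_tuple i u) v = (hamming u v).+1.
Proof.
move=> lt_i_d uv_i; have uv : size u = size v by rewrite !size_tuple.
have lt_i_u : i < size u by rewrite size_tuple.
by have := hamming_flip_at lt_i_u uv; rewrite uv_i eqxx /=; lia.
Qed.

Lemma Qadj_flip i (u : T) : i < d -> Qadj u (flip_tuple i u).
Proof. by move=> lt_i_d; rewrite QadjE hammingC hamming_flip_same // hammingxx. Qed.

Lemma walk_size (x y : T) p : walk (@Qadj d) x y p -> hamming x y <= size p.
Proof.
elim: p x => [|w p IH] x [] /=; first by move=> _ ->; rewrite hammingxx.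
move=> /andP[/QadjP[i lt_i_d ->] p_path] p_last.
have := IH _ (conj p_path p_last).
case: (nth false x i =P nth false y i) => [xy_i | /eqP xy_i].
- by rewrite hamming_flip_same // => /ltnW/leqW.
- by rewrite hamming_flip_diff // -ltnS => /(leq_trans (leqSpred _)).
Qed.

Lemma geodesic_exists (x y : T) : exists p, walk (@Qadj d) x y p /\ size p = hamming x y.
Proof.
move n_xy : (hamming x y) => n; elim: n x n_xy => [|n IH] x n_xy.
  by exists [::]; split => //; split => //=; apply/eqP; rewrite -hamming_tuple_eq0 n_xy.
have [i lt_i_x xy_i] : exists2 i, i < size x & nth false x i != nth false y i.
  by apply: hamming_gt0; rewrite ?n_xy ?size_tuple.
have lt_i_d : i < d by rewrite -(size_tuple x).
have [p [[p_path p_last] size_p]] : exists p, walk (@Qadj d) (flip_tuple i x) y p /\ size p = n.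
  by apply: IH; rewrite hamming_flip_diff ?n_xy.
exists (flip_tuple i x :: p); split; last by rewrite /= size_p.
by split; rewrite //= Qadj_flip.
Qed.

Lemma shortest_pathE (x y : T) p :
  shortest_path (@Qadj d) x y p <-> walk (@Qadj d) x y p /\ size p = hamming x y.
Proof.
split=> [[xyp p_min] | [xyp size_p]]; last by split=> // q; rewrite size_p; apply: walk_size.
split=> //; apply/eqP; rewrite eqn_leq walk_size // andbT.
by have [q [xyq <-]] := geodesic_exists x y; apply: p_min.
Qed.

Lemma visible_sym (X : {set T}) x y : visible (@Qadj d) X x y -> visible (@Qadj d) X y x.
Proof.
move=> [p [/shortest_pathE[[p_path p_last] size_p] p_X]].
exists (rev (belast x p)); split.
  apply/shortest_pathE; split; last by rewrite size_rev size_belast size_p hammingC.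
  split; first by rewrite -p_last rev_path; apply: sub_path p_path => a b; rewrite /= Qadj_sym.
  by case: p {p_path size_p p_X} p_last => [|a p] //= _; rewrite rev_cons last_rcons.
case: p {p_path size_p p_last} p_X => [|a p] //= p_X v.
rewrite /internal rev_cons size_rcons -cats1 take_cat size_rev size_belast ltnn subnn.
rewrite take0 cats0 mem_rev => v_p; apply: p_X.
by rewrite /internal /= lastI -cats1 take_size_cat ?size_belast.
Qed.
End Hypercube.

Inductive bit_trie := TLeaf of bool | TNode of bit_trie & bit_trie.

Fixpoint trie_mem (t : bit_trie) (s : seq bool) : bool :=
  match t, s with
  | TLeaf b, _ => b
  | TNode l r, c :: s' => trie_mem (if c then r else l) s'
  | TNode _ _, [::] => false
  end.

Fixpoint trie_empty (k : nat) : bit_trie :=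
  if k is k'.+1 then TNode (trie_empty k') (trie_empty k') else TLeaf false.

Fixpoint trie_insert (s : seq bool) (t : bit_trie) : bit_trie :=
  match s, t with
  | c :: s', TNode l r => if c then TNode l (trie_insert s' r) else TNode (trie_insert s' l) r
  | [::], TLeaf _ => TLeaf true
  | _, _ => t
  end.

Definition trie_of (k : nat) (l : seq (seq bool)) : bit_trie := foldr trie_insert (trie_empty k) l.

Fixpoint trie_complete (k : nat) (t : bit_trie) : bool :=
  match k, t with
  | 0, TLeaf _ => true
  | k'.+1, TNode l r => trie_complete k' l && trie_complete k' r
  | _, _ => false
  end.

Lemma trie_complete_empty k : trie_complete k (trie_empty k).
Proof. by elim: k => //= k ->. Qed.

Lemma trie_mem_empty k s : trie_mem (trie_empty k) s = false.
Proof. by elim: k s => [|k IH] [|c s] //=; case: c. Qed.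

Lemma trie_complete_insert k t s : size s = k -> trie_complete k t -> trie_complete k (trie_insert s t).
Proof.
elim: k t s => [|k IH] [b|l r] [|c s] //= [] s_k /andP[l_k r_k].
by case: c => /=; rewrite ?l_k ?r_k ?IH.
Qed.

Lemma trie_mem_insert k t s w : size s = k -> size w = k -> trie_complete k t ->
  trie_mem (trie_insert s t) w = (w == s) || trie_mem t w.
Proof.
elim: k t s w => [|k IH] [b|l r] [|c s] [|c' w] //= [] s_k [] w_k /andP[l_k r_k].
by rewrite eqseq_cons; case: c; case: c' => /=; rewrite ?IH.
Qed.

Definition sized (k : nat) (l : seq (seq bool)) : bool := all (fun s => size s == k) l.

Lemma trie_ofE k l w : sized k l -> size w = k -> trie_mem (trie_of k l) w = (w \in l).
Proof.
move=> l_k w_k; suff [] : trie_complete k (trie_of k l) /\ trie_mem (trie_of k l) w = (w \in l) by [].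
elim: l l_k => [|s l IH] /=; first by rewrite trie_complete_empty trie_mem_empty.
case/andP=> /eqP s_k /IH[l_complete l_mem]; split; first exact: trie_complete_insert.
by rewrite (trie_mem_insert s_k w_k l_complete) l_mem in_cons.
Qed.

Fixpoint clear_geodesic (d : nat) (X : bit_trie) (y : seq bool) (n : nat) (z : seq bool) : bool :=
  if n is n'.+1 then
    lazy_has (fun i =>
      if nth false z i == nth false y i then false else
      let w := flip_at i z in
      if w == y then true else if trie_mem X w then false else clear_geodesic d X y n' w)
    (iota 0 d)
  else z == y.

(* The [let] makes [vm_compute] build the trie only once. *)
Definition mutual_visibleb (d : nat) (l : seq (seq bool)) : bool :=
  let t := trie_of d l in all_pairs (fun x y => clear_geodesic d t y (hamming x y) x) l.

Section Decision.
Variable d : nat.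
Local Notation T := (d.-tuple bool).

Lemma internal_cons (w : T) p : p != [::] -> internal (w :: p) = w :: internal p.
Proof. by case: p. Qed.

Lemma clear_geodesicP (X : {set T}) t (y : T) :
  (forall w : T, trie_mem t w = (w \in X)) -> forall n (z : T), hamming z y = n ->
  clear_geodesic d t y n z <->
  exists p, walk (@Qadj d) z y p /\ size p = n /\ forall v, v \in internal p -> v \notin X.
Proof.
move=> tX; elim=> [|n IH] z zy_n /=.
  by split=> [/eqP/val_inj -> | [[|w p] [[_ /= <-] [//]]]]; first exists [::].
rewrite lazy_hasE; split.
- case/hasP=> i; rewrite mem_iota => /andP[_ lt_i_d]; case: eqP => // /eqP zy_i.
  have wy_n : hamming (flip_tuple i z) y = n by rewrite hamming_flip_diff ?zy_n.
  have zw : Qadj z (flip_tuple i z) := Qadj_flip z lt_i_d.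
  case: eqP => [w_y _ | w_y].
    have {}w_y : flip_tuple i z = y by apply: val_inj.
    exists [:: flip_tuple i z]; do !split => //=; first by rewrite zw.
    by rewrite -wy_n w_y hammingxx.
  rewrite (tX (flip_tuple i z)); case: ifP => // w_X /(IH _ wy_n) [p [[p_path p_last] [size_p p_X]]].
  have p_nil : p != [::] by apply/eqP => p_nil; apply: w_y; rewrite -p_last p_nil.
  exists (flip_tuple i z :: p); do !split => //=; [by rewrite zw | by rewrite size_p |].
  by move=> v; rewrite internal_cons // inE => /predU1P[-> | /p_X]; rewrite ?w_X.
- case=> -[[_ []] // | w p] [[/andP[/QadjP[i lt_i_d ->] p_path] p_last] [[size_p] p_X]].
  have zy_i : nth false z i != nth false y i.
    apply/eqP => zy_i; have := walk_size (conj p_path p_last).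
    by rewrite hamming_flip_same // zy_n size_p => ?; lia.
  have wy_n : hamming (flip_tuple i z) y = n by rewrite hamming_flip_diff ?zy_n.
  apply/hasP; exists i; first by rewrite mem_iota.
  rewrite (negbTE zy_i); case: eqP => // w_y.
  have p_nil : p != [::] by apply/eqP => p_nil; apply: w_y; rewrite -p_last p_nil.
  rewrite (tX (flip_tuple i z)) (negbTE (p_X _ _)) ?internal_cons ?mem_head //.
  apply/(IH _ wy_n); exists p; do 2!split => //; move=> v v_p.
  by apply: p_X; rewrite internal_cons // inE v_p orbT.
Qed.

Lemma visibleE (X : {set T}) t (x y : T) : (forall w : T, trie_mem t w = (w \in X)) ->
  visible (@Qadj d) X x y <-> clear_geodesic d t y (hamming x y) x.
Proof.
move=> tX; rewrite (clear_geodesicP tX (erefl _)).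
split=> [[p [/shortest_pathE[xyp size_p] p_X]] | [p [xyp [size_p p_X]]]]; exists p => //.
by split=> //; apply/shortest_pathE.
Qed.

Lemma mutual_visibleP l : sized d l ->
  reflect (mutual_visibility_set (@Qadj d) [set u : T | val u \in l]) (mutual_visibleb d l).
Proof.
move=> l_d.
have tX (w : T) : trie_mem (trie_of d l) w = (w \in [set u : T | val u \in l]).
  by rewrite inE trie_ofE ?size_tuple.
have lift s : s \in l -> exists2 u : T, val u \in l & val u = s.
  by move=> s_l; have s_d := allP l_d s s_l; exists (Tuple s_d).
apply: (iffP (all_pairsP _ _)).
- move=> _ _ /lift[u _ <-] /lift[v _ <-].
  by apply/idP/idP => /(visibleE _ _ tX)/visible_sym/(visibleE _ _ tX).
- by move=> s _; rewrite hammingxx /=.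
- by move=> l_vis u v; rewrite !inE => u_l v_l; apply/(visibleE _ _ tX)/l_vis.
- move=> X_mv _ _ /lift[u u_l <-] /lift[v v_l <-].
  by apply/(visibleE _ _ tX)/X_mv; rewrite inE.
Qed.

Lemma sized_sub l l' : sized d l -> {subset l' <= l} -> sized d l'.
Proof. by move=> l_d l'l; apply/allP => s /l'l /(allP l_d). Qed.

Lemma mutual_visibleb_sub l l' : sized d l -> {subset l' <= l} ->
  mutual_visibleb d l -> mutual_visibleb d l'.
Proof.
move=> l_d l'l /(mutual_visibleP l_d) l_mv; have l'_d := sized_sub l_d l'l.
apply/(mutual_visibleP l'_d)/(mutual_visibility_set_sub l_mv).
by apply/subsetP => u; rewrite !inE => /l'l.
Qed.

Definition bits_of (X : {set T}) : seq (seq bool) := map val (enum X).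

Lemma mem_bits_of X (u : T) : (val u \in bits_of X) = (u \in X).
Proof. by rewrite mem_map ?mem_enum //; apply: val_inj. Qed.

Lemma mutual_visibleb_bits_of (X : {set T}) l : mutual_visibility_set (@Qadj d) X ->
  {subset l <= bits_of X} -> mutual_visibleb d l.
Proof.
have X_d : sized d (bits_of X) by apply/allP => _ /mapP[u _ ->]; rewrite size_tuple.
move=> X_mv /(mutual_visibleb_sub X_d); apply; apply/(mutual_visibleP X_d).
by congr (mutual_visibility_set _ _): X_mv; apply/setP => u; rewrite inE mem_bits_of.
Qed.

Lemma size_filter_bits_of (X : {set T}) vs : uniq vs -> (forall u : T, val u \in vs) ->
  size [seq s <- vs | s \in bits_of X] = #|X|.
Proof.
move=> vs_uniq vs_cover; rewrite cardE -(size_map val); apply/perm_size/uniq_perm.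
- exact: filter_uniq.
- by rewrite map_inj_uniq ?enum_uniq //; apply: val_inj.
- by move=> s; rewrite mem_filter andb_idr // => /mapP[u _ ->].
Qed.
End Decision.

(* The lists [rev S ++ acc], for [S] a subsequence of [vs] with at least [k]
   elements, obtained by adding the elements of [S] one at a time to [acc]
   while the current list stays mutually visible. *)
Fixpoint mv_extensions (d : nat) (vs acc : seq (seq bool)) (k : nat) : seq (seq (seq bool)) :=
  if vs is v :: vs' then
    if size vs < k then [::] else
    (if mutual_visibleb d (v :: acc) then mv_extensions d vs' (v :: acc) k.-1 else [::])
      ++ mv_extensions d vs' acc k
  else if k == 0 then [:: acc] else [::].

Section Search.
Variable d : nat.
Local Notation T := (d.-tuple bool).

Lemma mv_extensions_complete (P : pred (seq bool)) vs acc k : sized d vs -> sized d acc ->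
  mutual_visibleb d (rev (filter P vs) ++ acc) -> k <= size (filter P vs) ->
  rev (filter P vs) ++ acc \in mv_extensions d vs acc k.
Proof.
elim: vs acc k => [|v vs IH] acc k /=; first by move=> _ _ _; rewrite leqn0 => /eqP ->; rewrite inE.
case/andP=> v_d vs_d acc_d mvb k_P.
have Pvs_vs : size (filter P vs) <= size vs by rewrite size_filter count_size.
have vs_k : ((size vs).+1 < k) = false.
  by apply/negbTE; rewrite -leqNgt (leq_trans k_P) //; case: (P v); [apply: Pvs_vs | apply: leqW].
rewrite vs_k mem_cat; move: mvb k_P; case: (P v) => mvb k_P; last by rewrite IH ?orbT.
rewrite rev_cons -cats1 -catA /= in mvb *; have vacc_d : sized d (v :: acc) by rewrite /= v_d.
rewrite (mutual_visibleb_sub _ _ mvb) ?IH //.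
- by rewrite -subn1 leq_subLR add1n.
- rewrite /sized all_cat; apply/andP; split; last exact: vacc_d.
  by apply: sized_sub vs_d _ => s; rewrite mem_rev mem_filter => /andP[].
- by move=> s s_vacc; rewrite mem_cat s_vacc orbT.
Qed.

Lemma mv_card_bound vs k (X : {set T}) : sized d vs -> uniq vs -> (forall u : T, val u \in vs) ->
  mv_extensions d vs [::] k.+1 = [::] -> mutual_visibility_set (@Qadj d) X -> #|X| <= k.
Proof.
move=> vs_d vs_uniq vs_cover no_ext X_mv.
rewrite -(size_filter_bits_of X vs_uniq vs_cover) leqNgt; apply/negP => k_X.
suff : rev [seq s <- vs | s \in bits_of X] ++ [::] \in [::] by [].
rewrite -no_ext mv_extensions_complete //; apply: mutual_visibleb_bits_of X_mv _ => s.
by rewrite cats0 mem_rev mem_filter => /andP[].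
Qed.

Section SplitBound.
Variables (lo up : seq (seq bool)) (k m : nat).
Hypotheses (lo_d : sized d lo) (up_d : sized d up).
Hypothesis lo_ext :
  lazy_all (fun L => (size L == k) && (mv_extensions d up L m.+1 == [::])) (mv_extensions d lo [::] k).

Lemma mv_half_bound (X : {set T}) : mutual_visibility_set (@Qadj d) X ->
  k <= size [seq s <- lo | s \in bits_of X] ->
  size [seq s <- lo | s \in bits_of X] = k /\ size [seq s <- up | s \in bits_of X] <= m.
Proof.
set Xlo := [seq s <- lo | _]; set Xup := [seq s <- up | _] => X_mv k_lo.
have in_X l : {subset l <= rev Xup ++ rev Xlo} -> mutual_visibleb d l.
  move=> l_X; apply: mutual_visibleb_bits_of X_mv _ => s /l_X.
  by rewrite mem_cat !mem_rev !mem_filter => /orP[] /andP[].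
have Xlo_d : sized d (rev Xlo) by apply: sized_sub lo_d _ => s; rewrite mem_rev mem_filter => /andP[].
have lo_all := lo_ext; rewrite lazy_allE in lo_all.
have /(allP lo_all)/andP[/eqP size_Xlo /eqP no_ext] : rev Xlo \in mv_extensions d lo [::] k.
  rewrite -[rev Xlo]cats0 mv_extensions_complete // in_X // => s.
  by rewrite cats0 mem_cat => ->; rewrite orbT.
split; first by rewrite -size_rev.
rewrite leqNgt; apply/negP => m_up.
suff : rev Xup ++ rev Xlo \in [::] by [].
by rewrite -no_ext mv_extensions_complete ?in_X.
Qed.
End SplitBound.

Lemma mv_card_bound_split lo up k m (X : {set T}) :
  sized d (lo ++ up) -> uniq (lo ++ up) -> (forall u : T, val u \in lo ++ up) ->
  lazy_all (fun L => (size L == k) && (mv_extensions d up L m.+1 == [::])) (mv_extensions d lo [::] k) ->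
  lazy_all (fun L => (size L == k) && (mv_extensions d lo L m.+1 == [::])) (mv_extensions d up [::] k) ->
  mutual_visibility_set (@Qadj d) X -> #|X| <= maxn (k + m) k.-1.*2.
Proof.
move=> lo_up_d lo_up_uniq lo_up_cover lo_ext up_ext X_mv.
have /andP[lo_d up_d] : sized d lo && sized d up by rewrite -all_cat.
rewrite -(size_filter_bits_of X lo_up_uniq lo_up_cover) filter_cat size_cat.
have := mv_half_bound lo_d up_d lo_ext X_mv; have := mv_half_bound up_d lo_d up_ext X_mv.
set a := size [seq s <- lo | _]; set b := size [seq s <- up | _]; lia.
Qed.
End Search.

Fixpoint all_bits (n : nat) : seq (seq bool) :=
  if n is n'.+1 then [seq b :: s | b <- [:: false; true], s <- all_bits n'] else [:: [::]].

Lemma mem_all_bits s : s \in all_bits (size s).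
Proof. by elim: s => //= b s IH; rewrite !mem_cat; case: b; rewrite (map_f _ IH) ?orbT. Qed.

Lemma tuple_all_bits d (u : d.-tuple bool) : val u \in all_bits d.
Proof. by case: u => s s_d /=; rewrite -(eqP s_d) mem_all_bits. Qed.

Definition cube_half (d : nat) (b : bool) : seq (seq bool) := [seq rcons s b | s <- all_bits d].

Lemma tuple_cube_halves d (u : d.+1.-tuple bool) : val u \in cube_half d false ++ cube_half d true.
Proof.
case: u => s + /=; case/lastP: s => [|s b] // s_d.
rewrite size_rcons eqSS in s_d; rewrite mem_cat -(eqP s_d).
by case: b; rewrite (map_f _ (mem_all_bits s)) ?orbT.
Qed.

Lemma mu_Q3_le (X : {set 3.-tuple bool}) : mutual_visibility_set (@Qadj 3) X -> #|X| <= 5.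
Proof. by apply: mv_card_bound (@tuple_all_bits 3) _; vm_compute. Qed.

Lemma mu_Q4_le (X : {set 4.-tuple bool}) : mutual_visibility_set (@Qadj 4) X -> #|X| <= 9.
Proof. by apply: mv_card_bound (@tuple_all_bits 4) _; vm_compute. Qed.

Lemma mu_Q5_le (X : {set 5.-tuple bool}) : mutual_visibility_set (@Qadj 5) X -> #|X| <= 16.
Proof.
(* [vm_cast_no_check]: the long search is then run only once, by the kernel. *)
apply: (mv_card_bound_split (k := 9) (m := 7) _ _ (@tuple_cube_halves 4));
  vm_cast_no_check (erefl true).
Qed.

Definition vtx_bits (d : nat) (s : seq nat) : seq bool := [seq nth 0 s i != 0 | i <- iota 0 d].

Lemma val_vtx d s : val (vtx d s) = vtx_bits d s.
Proof. by rewrite /vtx_bits /= -val_enum_ord -map_comp. Qed.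

Lemma vtx_mutual_visibility d (ss : seq (seq nat)) (X : {set d.-tuple bool}) :
  X =i map (vtx d) ss -> mutual_visibleb d (map (vtx_bits d) ss) ->
  mutual_visibility_set (@Qadj d) X.
Proof.
have ss_d : sized d (map (vtx_bits d) ss) by apply/allP => _ /mapP[s _ ->]; rewrite size_map size_iota.
move=> X_ss /(mutual_visibleP ss_d); congr (mutual_visibility_set _ _); apply/setP => u.
by rewrite inE X_ss -(mem_map val_inj) -map_comp (eq_map (@val_vtx d)).
Qed.

Lemma vtx_is_mu d n (ss : seq (seq nat)) :
  uniq (map (vtx_bits d) ss) -> mutual_visibleb d (map (vtx_bits d) ss) -> size ss = n ->
  (forall X, mutual_visibility_set (@Qadj d) X -> #|X| <= n) -> is_mu (@Qadj d) n.
Proof.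
move=> ss_uniq ss_mv <- mu_le; split=> //; exists [set u in map (vtx d) ss]; split.
  by apply: vtx_mutual_visibility ss_mv => u; rewrite inE.
rewrite cardsE -(size_map (vtx d)); apply/card_uniqP.
by rewrite -(map_inj_uniq val_inj) -map_comp (eq_map (@val_vtx d)).
Qed.

Definition Q3_witness : seq (seq nat) :=
  [:: [:: 0;0;0]; [:: 0;0;1]; [:: 1;0;0]; [:: 1;1;0]; [:: 0;1;1]].

Definition Q4_witness : seq (seq nat) :=
  [:: [:: 0;0;0;0]; [:: 0;0;0;1]; [:: 0;1;0;0]; [:: 0;1;1;0]; [:: 0;0;1;1];
      [:: 1;1;0;1]; [:: 1;0;1;0]; [:: 1;0;1;1]; [:: 1;1;1;0]].

Definition Q5_witness : seq (seq nat) :=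
  [:: [:: 0;0;0;0;0]; [:: 0;0;0;0;1]; [:: 0;0;1;0;0]; [:: 0;0;1;1;0];
      [:: 0;0;0;1;1]; [:: 0;1;1;0;1]; [:: 0;1;0;1;0]; [:: 0;1;0;1;1];
      [:: 0;1;1;1;0]; [:: 1;0;1;0;1]; [:: 1;0;1;1;1]; [:: 1;1;0;0;0];
      [:: 1;1;0;0;1]; [:: 1;1;1;0;0]; [:: 1;1;1;1;0]; [:: 1;1;0;1;1]].

Theorem mainTheorem3 :
  is_mu (@Qadj 3) 5 /\ is_mu (@Qadj 4) 9 /\ is_mu (@Qadj 5) 16 /\
      mutual_visibility_set (@Qadj 3)
        [set vtx 3 [:: 0;0;0]; vtx 3 [:: 0;0;1]; vtx 3 [:: 1;0;0];
             vtx 3 [:: 1;1;0]; vtx 3 [:: 0;1;1]] /\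
      mutual_visibility_set (@Qadj 4)
        [set vtx 4 [:: 0;0;0;0]; vtx 4 [:: 0;0;0;1]; vtx 4 [:: 0;1;0;0];
             vtx 4 [:: 0;1;1;0]; vtx 4 [:: 0;0;1;1]; vtx 4 [:: 1;1;0;1];
             vtx 4 [:: 1;0;1;0]; vtx 4 [:: 1;0;1;1]; vtx 4 [:: 1;1;1;0]] /\
      mutual_visibility_set (@Qadj 5)
        [set vtx 5 [:: 0;0;0;0;0]; vtx 5 [:: 0;0;0;0;1]; vtx 5 [:: 0;0;1;0;0];
             vtx 5 [:: 0;0;1;1;0]; vtx 5 [:: 0;0;0;1;1]; vtx 5 [:: 0;1;1;0;1];
             vtx 5 [:: 0;1;0;1;0]; vtx 5 [:: 0;1;0;1;1]; vtx 5 [:: 0;1;1;1;0];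
             vtx 5 [:: 1;0;1;0;1]; vtx 5 [:: 1;0;1;1;1]; vtx 5 [:: 1;1;0;0;0];
             vtx 5 [:: 1;1;0;0;1]; vtx 5 [:: 1;1;1;0;0]; vtx 5 [:: 1;1;1;1;0];
             vtx 5 [:: 1;1;0;1;1]].
Proof.
split; first by apply: (vtx_is_mu (ss := Q3_witness)) mu_Q3_le; vm_compute.
split; first by apply: (vtx_is_mu (ss := Q4_witness)) mu_Q4_le; vm_compute.
split; first by apply: (vtx_is_mu (ss := Q5_witness)) mu_Q5_le; vm_compute.
split; [apply: (vtx_mutual_visibility (ss := Q3_witness)) |
  split; [apply: (vtx_mutual_visibility (ss := Q4_witness)) |
          apply: (vtx_mutual_visibility (ss := Q5_witness))]];
  by [move=> u; rewrite !inE !orbA | vm_compute].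
Qed.
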